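(* Let $q\ge2$ and $b\in\mathbb{R}$, and let $U_C(b)$ be the operator on $\mathbb{C}^q\otimes\mathbb{C}^q$ with $\langle k\alpha|U_C(b)|j\beta\rangle=\frac1q\exp(\frac{2\pi i}{q}[bj\beta+(k\beta+j\alpha)])$, $k,\alpha,j,\beta\in\{0,\dots,q-1\}$. Then $U_C(b)=(F_q\otimes F_q)\,S\,D(b)$, where $F_q$ is the $q$-dimensional discrete Fourier transform and $D(b)$ is the diagonal unitary $\langle k\alpha|D(b)|j\beta\rangle=e^{2\pi i bj\beta/q}\delta_{kj}\delta_{\alpha\beta}$; consequently $U_C(b)$ is dual-unitary for every real $b$, and $e_p(U_C(b))\le\frac{q}{q+1}$, with equality for $b=1$.
   Context: Product basis $|i\alpha\rangle$; realignment $\langle\beta\alpha|X^{R_1}|ji\rangle=\langle i\alpha|X|j\beta\rangle$; a unitary is dual-unitary if its realignment is unitary. $S$ is the swap operator; $F_q$ has entries $\langle m|F_q|n\rangle=q^{-1/2}e^{2\pi i mn/q}$. $E(U)=1-q^{-4}\operatorname{tr}[(U^{R_1}U^{R_1\dagger})^2]$, $E(S)=1-1/q^2$, $e_p(U)=\frac{E(U)+E(US)-E(S)}{E(S)}$. *)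

(* R : realType (mathcomp-analysis, for cos/sin/pi),
   complex numbers C = R[i] (mathcomp-real-closed complex),
   operators on C^q (x) C^q = square matrices of size q*q, with the
   product basis |i alpha> encoded by mxtens_index (i, alpha) = i*q + alpha. *)
From HB Require Import structures.
From mathcomp Require Import all_boot all_order all_algebra.
From mathcomp Require Import all_classical all_reals all_analysis.
From mathcomp Require Import complex mxtens.
Set Implicit Arguments. Unset Strict Implicit. Unset Printing Implicit Defensive.
Import Order.TTheory GRing.Theory Num.Theory.
Local Open Scope ring_scope.

Section Defs.
Variable R : realType.
Local Notation C := (R[i]).

Definition expi (t : R) : C := Complex (cos t) (sin t).

Definition bidx (q : nat) (i a : 'I_q) : 'I_(q * q) := mxtens_index (i, a).

Definition adj (n : nat) (A : 'M[C]_n) : 'M[C]_n := (map_mx Num.conj A)^T.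

Definition unitary (n : nat) (U : 'M[C]_n) : Prop :=
  U *m adj U = 1%:M /\ adj U *m U = 1%:M.

Definition realign (q : nat) (X : 'M[C]_(q * q)) : 'M[C]_(q * q) :=
  \matrix_(x, y)
    let: (be, al) := mxtens_unindex x in
    let: (j, i) := mxtens_unindex y in
    X (bidx i al) (bidx j be).

Definition dual_unitary (q : nat) (U : 'M[C]_(q * q)) : Prop :=
  unitary U /\ unitary (realign U).

Definition swap_op (q : nat) : 'M[C]_(q * q) :=
  \matrix_(x, y)
    (((mxtens_unindex x).1 == (mxtens_unindex y).2) &&
     ((mxtens_unindex x).2 == (mxtens_unindex y).1))%:R.

Definition dft (q : nat) : 'M[C]_q :=
  \matrix_(m, n) ((Complex ((Num.sqrt (q%:R : R))^-1) 0)
                 * expi (2 * pi * (m%:R * n%:R) / q%:R)).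

Definition ent_power (q : nat) (U : 'M[C]_(q * q)) : C :=
  1 - (q%:R ^- 4) * \tr ((realign U *m adj (realign U)) ^+ 2).

Definition e_p (q : nat) (U : 'M[C]_(q * q)) : C :=
  (ent_power U + ent_power (U *m swap_op q) - ent_power (swap_op q))
    / ent_power (swap_op q).

Definition UC (q : nat) (b : R) : 'M[C]_(q * q) :=
  \matrix_(x, y)
    let: (k, al) := mxtens_unindex x in
    let: (j, be) := mxtens_unindex y in
    (q%:R : C)^-1 * expi (2 * pi / q%:R *
        (b * j%:R * be%:R + (k%:R * be%:R + j%:R * al%:R))).

Definition Dmat (q : nat) (b : R) : 'M[C]_(q * q) :=
  \matrix_(x, y)
    let: (k, al) := mxtens_unindex x in
    let: (j, be) := mxtens_unindex y in
    ((k == j) && (al == be))%:R * expi (2 * pi * b * j%:R * be%:R / q%:R).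

End Defs.

From HB Require Import structures.
From mathcomp Require Import all_boot all_order all_algebra.
From mathcomp Require Import all_classical all_reals all_analysis.
From mathcomp Require Import complex mxtens.
From mathcomp Require Import ring lra.
Import Order.TTheory GRing.Theory Num.Theory.
Set Implicit Arguments. Unset Strict Implicit. Unset Printing Implicit Defensive.
Local Open Scope ring_scope.

(* U_C(b) = (F_q (x) F_q) S D(b) is a product of unitaries, and the rows of its
   realignment are orthonormal by the orthogonality of the characters of Z_q, so
   U_C(b) is dual-unitary.  For a dual-unitary U one has E(U) = E(S), hence
   e_p(U) = E(US)/E(S).  The Gram matrix G of (U_C(b) S)^R has unimodular entries
   whenever beta = beta'; these contribute exactly q^3 to tr G^2, and the other
   entries contribute some N(b) >= 0, so that
   e_p(U_C(b)) = q/(q+1) - N(b)/(q^2 (q^2 - 1)).  For b = 1 the entries with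
   beta <> beta' are character sums in beta - beta' and vanish: N(1) = 0. *)

Lemma sum_unity_root_eq0 (F : idomainType) (w : F) (n : nat) :
  w ^+ n = 1 -> w != 1 -> \sum_(i < n) w ^+ i = 0.
Proof.
move=> wn1 w_neq1; apply/eqP; move: (subrX1 w n).
by rewrite wn1 subrr => /esym/eqP; rewrite mulf_eq0 subr_eq0 (negbTE w_neq1).
Qed.

Section Phase.
Variable R : realType.
Local Notation C := R[i].

Lemma expiD (a b : R) : expi (a + b) = expi a * expi b :> C.
Proof.
rewrite /expi cosD sinD; apply/eqP; rewrite eq_complex /=.
by apply/andP; split; apply/eqP; ring.
Qed.

Lemma expi0 : expi 0 = 1 :> C.
Proof. by rewrite /expi cos0 sin0. Qed.

Lemma conj_expi (t : R) : (expi t)^* = expi (- t) :> C.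
Proof. by rewrite /expi cosN sinN. Qed.

Lemma expiMn (n : nat) (t : R) : expi (n%:R * t) = expi t ^+ n :> C.
Proof.
elim: n => [|n IHn]; first by rewrite mul0r expi0 expr0.
by rewrite exprS -IHn -expiD mulrSr mulrDl mul1r addrC.
Qed.

Lemma expi_2pi_nat (n : nat) : expi (2 * pi * n%:R) = 1 :> C.
Proof.
rewrite mulrC expiMn.
have -> : expi (2 * pi) = 1 :> C by rewrite /expi mulr_natl cos2pi sin2pi.
exact: expr1n.
Qed.

Lemma expi_neq1 (x : R) : 0 < x < 2 * pi -> expi x != 1 :> C.
Proof.
move=> /andP[x_gt0 x_lt2pi]; apply/negP => /eqP[cos_x1 _].
have sin_half_gt0 : 0 < sin (x / 2) by apply: sin_gt0_pi; apply/andP; split; lra.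
have cos_double : cos x = cos (x / 2) * cos (x / 2) - sin (x / 2) * sin (x / 2).
  by rewrite -cosD -splitr.
have := cos2Dsin2 (x / 2); nra.
Qed.

Definition phase (q : nat) (t : R) : C := expi (2 * pi / q%:R * t).

Lemma phaseD q (s t : R) : phase q (s + t) = phase q s * phase q t.
Proof. by rewrite /phase mulrDr expiD. Qed.

Lemma phase0 q : phase q 0 = 1.
Proof. by rewrite /phase mulr0 expi0. Qed.

Lemma conj_phase q t : (phase q t)^* = phase q (- t).
Proof. by rewrite /phase conj_expi mulrN. Qed.

Lemma norm_phase q t : `|phase q t| = 1.
Proof. by apply/eqP; rewrite -sqrp_eq1 // normCK conj_phase -phaseD subrr phase0. Qed.

Lemma phase_mul_conj q (c : C) (s t : R) :
  (c * phase q s) * (c * phase q t)^* = c * c^* * phase q (s - t).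
Proof. by rewrite rmorphM /= conj_phase mulrACA phaseD. Qed.

Lemma phaseMn q (n : nat) t : phase q (n%:R * t) = phase q t ^+ n.
Proof. by rewrite /phase mulrCA expiMn. Qed.

Lemma phase_period q (n : nat) : (0 < q)%N -> phase q (q%:R * n%:R) = 1.
Proof.
move=> q_gt0; have q_neq0 : q%:R != 0 :> R by rewrite pnatr_eq0 -lt0n.
rewrite /phase mulrA divfK //; exact: expi_2pi_nat.
Qed.

Lemma phase_neq1 q (d : nat) : (0 < d < q)%N -> phase q d%:R != 1.
Proof.
move=> /andP[d_gt0 d_ltq]; apply: expi_neq1.
have q_gt0 : 0 < q%:R :> R by rewrite ltr0n (ltn_trans d_gt0).
have d_pos : 0 < d%:R :> R by rewrite ltr0n.
have d_lt_q : d%:R < q%:R :> R by rewrite ltr_nat.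
have -> : 2 * pi / q%:R * d%:R = 2 * pi * (d%:R / q%:R) :> R by rewrite mulrAC mulrA.
have ratio_gt0 : 0 < d%:R / q%:R :> R by rewrite divr_gt0.
have ratio_lt1 : d%:R / q%:R < 1 :> R by rewrite ltr_pdivrMr // mul1r.
have := pi_gt0 R; nra.
Qed.

Lemma sum_phase_nat_eq0 q (d : nat) : (0 < d < q)%N ->
  \sum_(j < q) phase q (j%:R * d%:R) = 0.
Proof.
move=> d_range; under eq_bigr do rewrite phaseMn.
apply: sum_unity_root_eq0; last exact: phase_neq1.
case/andP: d_range => d_gt0 d_ltq.
by rewrite -phaseMn phase_period // (ltn_trans d_gt0).
Qed.

Lemma sum_phase_ord q (a c : 'I_q) :
  \sum_(j < q) phase q (j%:R * (a%:R - c%:R)) = (a == c)%:R * q%:R.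
Proof.
rewrite -val_eqE /=; case: ltngtP => [a_lt_c|c_lt_a|/val_inj ->]; last first.
- rewrite mul1r subrr; under eq_bigr do rewrite mulr0 phase0.
  by rewrite sumr_const card_ord.
- rewrite mul0r -natrB 1?ltnW // sum_phase_nat_eq0 //.
  by rewrite subn_gt0 c_lt_a (leq_ltn_trans (leq_subr _ _)).
have d_range : (0 < c - a < q)%N.
  by rewrite subn_gt0 a_lt_c (leq_ltn_trans (leq_subr _ _)).
rewrite mul0r; apply/eqP; rewrite -conjC_eq0 rmorph_sum /=.
under eq_bigr do rewrite conj_phase -mulrN opprB -natrB 1?ltnW //.
by rewrite sum_phase_nat_eq0.
Qed.

End Phase.

Lemma tensmx11 (K : comPzRingType) m n :
  (1%:M : 'M[K]_m) *t (1%:M : 'M[K]_n) = 1%:M.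
Proof.
apply/matrixP => x y.
case: (mxtens_indexP x) => i k; case: (mxtens_indexP y) => j l.
by rewrite tensmxE !mxE (can_eq (@mxtens_indexK _ _)) xpair_eqE -natrM mulnb.
Qed.

Section Adjoint.
Variable R : realType.
Local Notation C := R[i].

Lemma adjE n (A : 'M[C]_n) i j : adj A i j = (A j i)^*.
Proof. by rewrite !mxE. Qed.

Lemma adjK n : involutive (@adj R n).
Proof. by move=> A; apply/matrixP => i j; rewrite !adjE conjCK. Qed.

Lemma adj_mul n (A B : 'M[C]_n) : adj (A *m B) = adj B *m adj A.
Proof. by rewrite /adj map_mxM trmx_mul. Qed.

Lemma adj_tens m n (A : 'M[C]_m) (B : 'M[C]_n) : adj (A *t B) = adj A *t adj B.
Proof. by rewrite /adj map_mxT trmx_tens. Qed.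

Lemma unitary_mul1 n (U : 'M[C]_n) : U *m adj U = 1%:M -> unitary U.
Proof. by move=> UU1; split=> //; apply: mulmx1C. Qed.

Lemma unitary_mul n (U V : 'M[C]_n) : unitary U -> unitary V -> unitary (U *m V).
Proof.
move=> [UU1 _] [VV1 _]; apply: unitary_mul1.
by rewrite adj_mul mulmxA -(mulmxA U) VV1 mulmx1 UU1.
Qed.

Lemma unitary_tens m n (A : 'M[C]_m) (B : 'M[C]_n) :
  unitary A -> unitary B -> unitary (A *t B).
Proof.
move=> [AA1 _] [BB1 _]; apply: unitary_mul1.
by rewrite adj_tens tensmx_mul AA1 BB1 tensmx11.
Qed.

Lemma mxtrace_gram_sqr n (M : 'M[C]_n) :
  \tr ((M *m adj M) ^+ 2) = \sum_x \sum_y `|(M *m adj M) x y| ^+ 2.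
Proof.
have gram_adj : adj (M *m adj M) = M *m adj M by rewrite adj_mul adjK.
rewrite expr2 -mulmxE; apply: eq_bigr => x _; rewrite mxE; apply: eq_bigr => y _.
by rewrite normCK -adjE gram_adj.
Qed.

End Adjoint.

Section ProductBasis.
Variables (R : realType) (q : nat).
Local Notation C := R[i].
Implicit Types (A B X : 'M[C]_(q * q)) (b : R).

Lemma natr_ord_neq0 (k : 'I_q) : q%:R != 0 :> C.
Proof. by rewrite pnatr_eq0 -lt0n (leq_ltn_trans _ (ltn_ord k)). Qed.

Lemma sum_bidx (F : 'I_(q * q) -> C) :
  \sum_z F z = \sum_(a < q) \sum_(c < q) F (bidx a c).
Proof.
rewrite pair_big /= (reindex (@mxtens_index q q)); first by apply: eq_bigr => -[].
by exists (@mxtens_unindex q q) => x _; [apply: mxtens_indexK | apply: mxtens_unindexK].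
Qed.

Lemma eq_bidx (a c a' c' : 'I_q) : (bidx a c == bidx a' c') = (a == a') && (c == c').
Proof. by rewrite (can_eq (@mxtens_indexK q q)) xpair_eqE. Qed.

Lemma matrix_bidxP A B :
  (forall a c a' c', A (bidx a c) (bidx a' c') = B (bidx a c) (bidx a' c')) -> A = B.
Proof.
move=> eqAB; apply/matrixP => x y.
by case: (mxtens_indexP x) => a c; case: (mxtens_indexP y) => a' c'; apply: eqAB.
Qed.

Lemma mulmx_bidxE A B x y :
  (A *m B) x y = \sum_(a < q) \sum_(c < q) A x (bidx a c) * B (bidx a c) y.
Proof. by rewrite mxE sum_bidx. Qed.

Lemma mx1_bidx a c a' c' :
  (1%:M : 'M[C]_(q * q)) (bidx a c) (bidx a' c') = ((a == a') && (c == c'))%:R.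
Proof. by rewrite mxE eq_bidx. Qed.

Lemma swap_bidx a c a' c' :
  swap_op R q (bidx a c) (bidx a' c') = ((a == c') && (c == a'))%:R.
Proof. by rewrite mxE /bidx !mxtens_indexK. Qed.

Lemma realign_bidx X be al j i :
  realign X (bidx be al) (bidx j i) = X (bidx i al) (bidx j be).
Proof. by rewrite mxE /bidx !mxtens_indexK. Qed.

Lemma UC_bidx b k al j be : UC q b (bidx k al) (bidx j be) =
  (q%:R)^-1 * phase q (b * j%:R * be%:R + (k%:R * be%:R + j%:R * al%:R)).
Proof. by rewrite mxE /bidx !mxtens_indexK. Qed.

Lemma Dmat_bidx b k al j be : Dmat q b (bidx k al) (bidx j be) =
  ((k == j) && (al == be))%:R * phase q (b * j%:R * be%:R).
Proof. by rewrite mxE /bidx !mxtens_indexK /phase; congr (_ * expi _); ring. Qed.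

Lemma mulmx_swap_bidx X x j be : (X *m swap_op R q) x (bidx j be) = X x (bidx be j).
Proof.
rewrite mulmx_bidxE (bigD1 be) //= [Y in _ + Y]big1 ?addr0
  => [|a /negbTE a_neq]; last first.
  by rewrite big1 // => c _; rewrite swap_bidx a_neq mulr0.
rewrite (bigD1 j) //= [Y in _ + Y]big1 ?addr0
  => [|c /negbTE c_neq]; last first.
  by rewrite swap_bidx eqxx c_neq mulr0.
by rewrite swap_bidx !eqxx mulr1.
Qed.

Lemma mulmx_Dmat_bidx X b x j be :
  (X *m Dmat q b) x (bidx j be) = X x (bidx j be) * phase q (b * j%:R * be%:R).
Proof.
rewrite mulmx_bidxE (bigD1 j) //= [Y in _ + Y]big1 ?addr0
  => [|a /negbTE a_neq]; last first.
  by rewrite big1 // => c _; rewrite Dmat_bidx a_neq mul0r mulr0.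
rewrite (bigD1 be) //= [Y in _ + Y]big1 ?addr0
  => [|c /negbTE c_neq]; last first.
  by rewrite Dmat_bidx eqxx c_neq mul0r mulr0.
by rewrite Dmat_bidx !eqxx mul1r.
Qed.

End ProductBasis.

Section DualUnitarity.
Variables (R : realType) (q : nat).
Local Notation C := R[i].
Implicit Types (b : R).

Lemma conj_invn : ((q%:R : C)^-1)^* = (q%:R)^-1.
Proof. by rewrite fmorphV /= conjC_nat. Qed.

Let s : C := Complex (Num.sqrt (q%:R : R))^-1 0.

Lemma dftE m n : dft R q m n = s * phase q (m%:R * n%:R).
Proof. by rewrite mxE /phase; congr (_ * expi _); rewrite mulrAC mulrA. Qed.

Lemma dft_scale_sqr : s * s = (q%:R)^-1.
Proof.
rewrite /s complexr0 -rmorphM /= -invfM -expr2 sqr_sqrtr ?ler0n //.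
by rewrite fmorphV /= rmorph_nat.
Qed.

Lemma conj_dft_scale : s^* = s.
Proof. by apply: geC0_conj; rewrite /s complexr0 ler0c invr_ge0 sqrtr_ge0. Qed.

Lemma unitary_dft : unitary (dft R q).
Proof.
apply: unitary_mul1; apply/matrixP => m m'; rewrite [LHS]mxE [RHS]mxE.
transitivity ((q%:R : C)^-1 * \sum_(n < q) phase q (n%:R * (m%:R - m'%:R))).
  rewrite big_distrr; apply: eq_bigr => n _.
  rewrite adjE !dftE phase_mul_conj conj_dft_scale dft_scale_sqr.
  by congr (_ * phase q _); ring.
by rewrite sum_phase_ord mulrCA mulVf ?mulr1 ?(@natr_ord_neq0 R q m).
Qed.

Lemma UC_factorization b : UC q b = (dft R q *t dft R q *m swap_op R q) *m Dmat q b.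
Proof.
apply: matrix_bidxP => k al j be.
rewrite mulmx_Dmat_bidx mulmx_swap_bidx /bidx tensmxE !dftE -/(bidx _ _) UC_bidx.
rewrite mulrACA dft_scale_sqr -[RHS]mulrA -!phaseD; congr (_ * phase q _); ring.
Qed.

Lemma adj_swap : adj (swap_op R q) = swap_op R q.
Proof.
apply: matrix_bidxP => k al j be.
by rewrite adjE !swap_bidx conjC_nat (eq_sym j) (eq_sym be) andbC.
Qed.

Lemma unitary_swap : unitary (swap_op R q).
Proof.
apply: unitary_mul1; rewrite adj_swap; apply: matrix_bidxP => k al j be.
by rewrite mulmx_swap_bidx swap_bidx mx1_bidx.
Qed.

Lemma adj_Dmat b : adj (Dmat q b) = Dmat q (- b).
Proof.
apply: matrix_bidxP => k al j be.
rewrite adjE !Dmat_bidx rmorphM /= conjC_nat conj_phase (eq_sym j) (eq_sym be).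
case: (k =P j) => [->|]; case: (al =P be) => [->|] //=; rewrite ?mul0r //.
by rewrite !mul1r mulNr mulNr.
Qed.

Lemma unitary_Dmat b : unitary (Dmat q b).
Proof.
apply: unitary_mul1; rewrite adj_Dmat; apply: matrix_bidxP => k al j be.
rewrite mulmx_Dmat_bidx Dmat_bidx mx1_bidx -mulrA -phaseD.
by rewrite !mulNr subrr phase0 mulr1.
Qed.

Lemma unitary_UC b : unitary (UC q b).
Proof.
rewrite UC_factorization; apply: unitary_mul; last exact: unitary_Dmat.
by apply: unitary_mul; [apply: unitary_tens; apply: unitary_dft | apply: unitary_swap].
Qed.

Lemma unitary_realign_UC b : unitary (realign (UC q b)).
Proof.
apply: unitary_mul1; apply: matrix_bidxP => be al be' al'.
rewrite mulmx_bidxE mx1_bidx.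
transitivity ((q%:R : C)^-1 * (q%:R)^-1 * \sum_(j < q)
    (phase q (b * j%:R * (be%:R - be'%:R) + j%:R * (al%:R - al'%:R))
     * \sum_(i < q) phase q (i%:R * (be%:R - be'%:R)))).
  rewrite big_distrr; apply: eq_bigr => j _.
  rewrite !big_distrr /=; apply: eq_bigr => i _.
  rewrite adjE !realign_bidx !UC_bidx phase_mul_conj conj_invn -phaseD.
  by congr (_ * phase q _); ring.
have q_neq0 := @natr_ord_neq0 R q be.
rewrite sum_phase_ord; case: (be =P be') => [<-|_] /=; last first.
  by rewrite big1 ?mulr0 // => j _; rewrite !mul0r mulr0.
under eq_bigr do rewrite subrr !mulr0 add0r mul1r.
rewrite -big_distrl /= sum_phase_ord.
by case: (al =P al') => _ /=; rewrite ?mul0r ?mulr0 //; field.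
Qed.

Lemma dual_unitary_UC b : dual_unitary (UC q b).
Proof. by split; [apply: unitary_UC | apply: unitary_realign_UC]. Qed.

End DualUnitarity.

Section EntanglingPower.
Variables (R : realType) (q : nat).
Local Notation C := R[i].
Local Notation UCS_R b := (realign (UC q b *m swap_op R q)).
Implicit Types (b : R) (U : 'M[C]_(q * q)).

Lemma realign_swap : realign (swap_op R q) = swap_op R q.
Proof.
by apply: matrix_bidxP => k al j be; rewrite realign_bidx !swap_bidx (eq_sym be).
Qed.

Lemma ent_power_swap : ent_power (swap_op R q) = 1 - (q%:R)^-2.
Proof.
rewrite /ent_power realign_swap (unitary_swap R q).1 expr1n mxtrace1 natrM.
have [->|q_neq0] := eqVneq (q%:R : C) 0; first by rewrite !expr0n /= invr0 !mul0r.
by congr (_ - _); field.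
Qed.

Lemma ent_power_dual_unitary U :
  unitary (realign U) -> ent_power U = ent_power (swap_op R q).
Proof. by move=> [UR1 _]; rewrite /ent_power UR1 realign_swap (unitary_swap R q).1. Qed.

Lemma e_p_dual_unitary U : unitary (realign U) ->
  e_p U = ent_power (U *m swap_op R q) / ent_power (swap_op R q).
Proof. by move=> /ent_power_dual_unitary EU; rewrite /e_p EU addrAC subrr add0r. Qed.

Definition gram_UCS b (be al be' al' : 'I_q) : C := (q%:R)^-1 *
  \sum_(j < q) phase q (b * j%:R * (be%:R - be'%:R) + (be%:R * al%:R - be'%:R * al'%:R)).

Lemma gram_UCS_bidx b be al be' al' :
  (UCS_R b *m adj (UCS_R b)) (bidx be al) (bidx be' al') = gram_UCS b be al be' al'.
Proof.
have q_neq0 := @natr_ord_neq0 R q be.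
rewrite mulmx_bidxE /gram_UCS big_distrr /=; apply: eq_bigr => j _.
transitivity (\sum_(i < q) (q%:R : C)^-1 * (q%:R)^-1 *
    phase q (b * j%:R * (be%:R - be'%:R) + (be%:R * al%:R - be'%:R * al'%:R))).
  apply: eq_bigr => i _.
  rewrite adjE !realign_bidx !mulmx_swap_bidx !UC_bidx phase_mul_conj conj_invn.
  by congr (_ * phase q _); ring.
rewrite sumr_const card_ord -mulr_natr; move: (phase q _) => e.
by field; exact: q_neq0.
Qed.

Lemma norm_gram_UCS_diag b be al al' : `|gram_UCS b be al be al'| = 1.
Proof.
have q_neq0 := @natr_ord_neq0 R q be.
rewrite /gram_UCS; under eq_bigr do rewrite subrr mulr0 add0r.
rewrite sumr_const card_ord -[phase _ _ *+ _]mulr_natr mulrCA mulVf //.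
by rewrite mulr1 norm_phase.
Qed.

Lemma gram_UCS1_offdiag be al be' al' : be != be' -> gram_UCS 1 be al be' al' = 0.
Proof.
move=> /negbTE be_neq; rewrite /gram_UCS; under eq_bigr do rewrite mul1r phaseD.
by rewrite -big_distrl /= sum_phase_ord be_neq !mul0r mulr0.
Qed.

Definition gram_offblock b : C :=
  \sum_(be < q) \sum_(al < q) \sum_(be' < q | be' != be) \sum_(al' < q)
    `|gram_UCS b be al be' al'| ^+ 2.

Lemma gram_offblock_ge0 b : 0 <= gram_offblock b.
Proof. by do 4!(apply: sumr_ge0 => ? _); rewrite exprn_ge0. Qed.

Lemma gram_offblock1 : gram_offblock 1 = 0.
Proof.
apply: big1 => be _; apply: big1 => al _; apply: big1 => be' be'_neq.
by apply: big1 => al' _; rewrite gram_UCS1_offdiag 1?eq_sym // normr0 expr2 mulr0.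
Qed.

Lemma mxtrace_gram_UCS b :
  \tr ((UCS_R b *m adj (UCS_R b)) ^+ 2) = (q * q * q)%:R + gram_offblock b.
Proof.
rewrite mxtrace_gram_sqr sum_bidx /gram_offblock.
transitivity (\sum_(be < q) \sum_(al < q) ((q%:R : C) +
    \sum_(be' < q | be' != be) \sum_(al' < q) `|gram_UCS b be al be' al'| ^+ 2)).
  apply: eq_bigr => be _; apply: eq_bigr => al _.
  rewrite sum_bidx (bigD1 be) //=; congr (_ + _).
    under eq_bigr do rewrite gram_UCS_bidx norm_gram_UCS_diag expr1n.
    by rewrite sumr_const card_ord.
  by apply: eq_bigr => be' _; apply: eq_bigr => al' _; rewrite gram_UCS_bidx.
under eq_bigr do rewrite big_split /= sumr_const card_ord.
by rewrite big_split /= sumr_const card_ord -!mulrnA mulnA.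
Qed.

Lemma e_p_UC b : (2 <= q)%N -> e_p (UC q b) =
  q%:R / (q%:R + 1) - gram_offblock b / (q%:R ^+ 2 * (q%:R ^+ 2 - 1)).
Proof.
move=> q_ge2.
have q_neq0 : (q%:R : C) != 0 by rewrite pnatr_eq0 -lt0n ltnW.
have q1_neq0 : (q%:R : C) + 1 != 0 by rewrite natr1 pnatr_eq0.
have qq1_neq0 : (q%:R : C) ^+ 2 - 1 != 0.
  rewrite (_ : _ - 1 = (q%:R - 1) * (q%:R + 1)); last by ring.
  by rewrite mulf_neq0 // subr_eq0 pnatr_eq1 gtn_eqF.
rewrite e_p_dual_unitary ?ent_power_swap; last exact: unitary_realign_UC.
rewrite /ent_power mxtrace_gram_UCS !natrM; move: (gram_offblock b) => N.
by field; rewrite qq1_neq0 q_neq0 q1_neq0.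
Qed.

Lemma e_p_UC_le b : (2 <= q)%N -> e_p (UC q b) <= q%:R / (q%:R + 1).
Proof.
move=> q_ge2; rewrite e_p_UC // gerBl divr_ge0 ?gram_offblock_ge0 //.
by rewrite mulr_ge0 ?exprn_ge0 ?ler0n // subr_ge0 -natrX ler1n expn_gt0 ltnW.
Qed.

End EntanglingPower.

Theorem mainTheorem9 (R : realType) (q : nat) (hq : (2 <= q)%N) (b : R) :
  UC q b = (tensmx (dft R q) (dft R q) *m swap_op R q) *m Dmat q b
  /\ unitary (Dmat q b)
  /\ dual_unitary (UC q b)
  /\ e_p (UC q b) <= (q%:R / (q%:R + 1) : R[i])
  /\ e_p (UC q 1) = (q%:R / (q%:R + 1) : R[i]).
Proof.
split; first exact: UC_factorization.
split; first exact: unitary_Dmat.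
split; first exact: dual_unitary_UC.
split; first exact: e_p_UC_le.
by rewrite e_p_UC // gram_offblock1 mul0r subr0.
Qed.
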